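(* Let $q$ be a prime power, $h\geq 4$, and let $\alpha\in\mathbb{F}_{q^h}\setminus\mathbb{F}_q$ with $\mathbb{F}_{q^h}=\mathbb{F}_q(\alpha)$. For $s,t\in\mathbb{F}_q$ let $f_{s,t}:\mathbb{F}_{q^h}\to\mathbb{F}_q$ be the $\mathbb{F}_q$-linear functional defined on the basis $1,\alpha,\dots,\alpha^{h-1}$ by $f_{s,t}(1)=1$, $f_{s,t}(\alpha^2)=s$, $f_{s,t}(\alpha^{h-1})=t$, and $f_{s,t}(\alpha^j)=0$ for all other $j\in\{1,\dots,h-2\}\setminus\{2\}$. Then there exist at least $q-1$ pairs $(s,t)\in\mathbb{F}_q^2$ such that $f=f_{s,t}$ and $\beta=1$ satisfy: (1) $f(\alpha/\beta)\neq 1$, and (2) for all $k\in\mathbb{F}_q$, $k\neq f\left(\frac{\alpha^2}{\beta}\right)+\left(f\left(\frac{\beta^2}{\alpha+k}\right)+k\right)f\left(\frac{\alpha}{\beta}\right)+k f\left(\frac{\beta^2}{\alpha+k}\right)f\left(\frac{1}{\beta}\right)$. *)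

From HB Require Import structures.
From mathcomp Require Import all_boot all_order all_algebra all_field.
Set Implicit Arguments. Unset Strict Implicit. Unset Printing Implicit Defensive.
Import GRing.Theory.
Local Open Scope ring_scope.

Definition pow_basis (F : fieldType) (L : fieldExtType F) (a : L) (h : nat)
  : h.-tuple L := [tuple a ^+ i | i < h].

Definition f_st (F : fieldType) (L : fieldExtType F) (h : nat) (a : L)
  (s t : F) (x : L) : F :=
  \sum_(i < h) coord (pow_basis a h) i x *
     (if val i == 0%N then 1 else if val i == 2%N then s
      else if val i == h.-1 then t else 0).

Definition good_pair (F : finFieldType) (L : fieldExtType F) (f : L -> F)
  (a b : L) : bool :=
  (f (a / b) != 1) &&
  [forall k : F,
     k != f (a ^+ 2 / b) + (f (b ^+ 2 / (a + k%:A)) + k) * f (a / b)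
          + k * f (b ^+ 2 / (a + k%:A)) * f (1 / b)].

From HB Require Import structures.
From mathcomp Require Import all_boot all_order all_algebra all_field.
From mathcomp Require Import ring.
Set Implicit Arguments. Unset Strict Implicit. Unset Printing Implicit Defensive.
Import GRing.Theory.
Local Open Scope ring_scope.

(* For beta = 1 we have f(alpha) = 0, f(alpha^2) = s and f(1) = 1, so the pair
   (f_{s,t}, 1) is good iff k <> s + k f((alpha + k)^-1) for every k in F_q;
   at k = 0 this just says s <> 0.  Splitting f_{s,t} = f_{s,0} + t c, with c
   the last coordinate in the power basis, we have c((alpha + k)^-1) <> 0, for
   otherwise (X + k) p - 1 would be a nonzero polynomial of degree < h killing
   alpha.  So each k <> 0 rules out exactly one t, and every s <> 0 admits a
   good t among the q candidates. *)

Section PowerBasis.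

Variables (F : fieldType) (L : fieldExtType F) (n : nat) (a : L).

Local Notation X := (pow_basis a n.+1).

Lemma nth_pow_basis (i : 'I_n.+1) : X`_i = a ^+ i.
Proof. by rewrite -tnth_nth tnth_mktuple. Qed.

Definition alg_poly (c : 'I_n.+1 -> F) : {poly L} :=
  \poly_(j < n.+1) (c (inord j))%:A.

Lemma alg_polyOver c : alg_poly c \is a polyOver 1%VS.
Proof.
apply/polyOverP => j; rewrite coef_poly.
by case: ifP => _; rewrite ?rpredZ ?memv_line ?mem0v.
Qed.

Lemma size_alg_poly c : (size (alg_poly c) <= n.+1)%N.
Proof. exact: size_poly. Qed.

Lemma coef_alg_poly c (i : 'I_n.+1) : (alg_poly c)`_i = (c i)%:A.
Proof. by rewrite coef_poly ltn_ord inord_val. Qed.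

Lemma horner_alg_poly c : (alg_poly c).[a] = \sum_i c i *: X`_i.
Proof.
rewrite horner_poly; apply: eq_bigr => i _.
by rewrite inord_val mulr_algl nth_pow_basis.
Qed.

Hypotheses (dimL : \dim {:L} = n.+1) (gen_a : <<1%VS; a>>%VS = fullv).

Lemma adjoin_degree_gen : adjoin_degree 1%VS a = n.+1.
Proof. by rewrite /adjoin_degree gen_a dimL dimv1 divn1. Qed.

Lemma small_root_poly_eq0 (p : {poly L}) :
  p \is a polyOver 1%VS -> (size p <= n.+1)%N -> p.[a] = 0 -> p = 0.
Proof.
move=> p_over size_p pa0; apply/eqP.
by rewrite -(@root_small_adjoin_poly _ _ 1%AS a) ?adjoin_degree_gen //; apply/rootP.
Qed.

Lemma pow_basis_free : free X.
Proof.
apply/freeP => c sum_c0 i.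
have p0 : alg_poly c = 0.
  by apply: small_root_poly_eq0; rewrite ?alg_polyOver ?size_alg_poly ?horner_alg_poly.
have /eqP := coef_alg_poly c i; rewrite p0 coef0 eq_sym scaler_eq0 oner_eq0 orbF.
exact/eqP.
Qed.

Lemma pow_basis_basis : basis_of fullv X.
Proof. by rewrite basisEfree pow_basis_free subvf dimL size_tuple /=. Qed.

Lemma coord_pow_basis (i j : 'I_n.+1) : coord X i (a ^+ j) = (j == i)%:R.
Proof. by rewrite -nth_pow_basis coord_free ?pow_basis_free. Qed.

Lemma horner_alg_poly_coord x : (alg_poly (coord X ^~ x)).[a] = x.
Proof. by rewrite horner_alg_poly -(coord_basis pow_basis_basis (memvf x)). Qed.

Lemma coord_max_inv_neq0 (k : F) :
  a \notin 1%VS -> coord X ord_max ((a + k%:A)^-1) != 0.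
Proof.
move=> aNF; apply/negP => /eqP top0.
have ak_neq0 : a + k%:A != 0.
  by apply: contra aNF; rewrite addr_eq0 => /eqP ->; rewrite rpredN rpredZ ?memv_line.
set x := (a + k%:A)^-1 in top0; set p := alg_poly (coord X ^~ x).
have size_p : (size p <= n)%N.
  apply/leq_sizeP => j; rewrite leq_eqVlt => /predU1P[<-|]; last first.
    by move=> lt_nj; rewrite nth_default // (leq_trans (size_alg_poly _)).
  by rewrite (coef_alg_poly _ ord_max) top0 scale0r.
pose q := ('X + (k%:A)%:P) * p - 1.
have q0 : q = 0.
  apply: small_root_poly_eq0.
  - by rewrite rpredB ?rpred1 ?rpredM ?polyOverXaddC ?alg_polyOver ?rpredZ ?memv_line.
  - rewrite (leq_trans (size_polyD _ _)) // size_polyN size_poly1 geq_max /= andbT.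
    by rewrite (leq_trans (size_polyMleq _ _)) // size_XaddC.
  - by rewrite /q !hornerE horner_alg_poly_coord mulfV ?subrr.
have := congr1 (horner^~ (- k%:A)) q0.
by rewrite /q !hornerE addNr mul0r sub0r => /eqP; rewrite oppr_eq0 oner_eq0.
Qed.

Lemma f_st_pow s t (m : 'I_n.+1) :
  f_st n.+1 a s t (a ^+ m) =
    if val m == 0%N then 1 else if val m == 2%N then s
    else if val m == n then t else 0.
Proof.
rewrite /f_st (bigD1 m) //= big1 => [|i /negPf ni].
  by rewrite coord_pow_basis eqxx mul1r addr0.
by rewrite coord_pow_basis eq_sym ni mul0r.
Qed.

End PowerBasis.

Lemma f_st_coord (F : fieldType) (L : fieldExtType F) (n : nat) (a : L)
    (s t : F) (x : L) :
  f_st n.+4 a s t x = f_st n.+4 a s 0 x + t * coord (pow_basis a n.+4) ord_max x.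
Proof.
rewrite /f_st (bigD1 ord_max) //= [in RHS](bigD1 ord_max) //= eqxx.
rewrite mulr0 add0r addrC mulrC; congr (_ + _); apply: eq_bigr => i /negPf ni.
have -> : (val i == n.+3) = false by rewrite -[n.+3]/(val (@ord_max n.+3)) (inj_eq val_inj).
by case: ifP => //; case: ifP.
Qed.

Lemma exists_notin_imset (aT rT : finType) (g : aT -> rT) (A : {set aT}) :
  (#|A| < #|rT|)%N -> exists y, y \notin g @: A.
Proof.
move=> ltA; apply/existsP; rewrite -negb_forall; apply: contraTN ltA => /forallP gA.
rewrite -leqNgt (leq_trans _ (leq_imset_card g A)) // subset_leq_card //.
by apply/subsetP => y _; apply: gA.
Qed.

Section GoodPairs.

Variables (F : finFieldType) (L : fieldExtType F) (n : nat) (a : L).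
Hypotheses (dimL : \dim {:L} = n.+4) (gen_a : <<1%VS; a>>%VS = fullv)
  (aNF : a \notin 1%VS).

Local Notation f s t := (f_st n.+4 a s t).

Lemma good_pair_f_stE s t :
  good_pair (f s t) a 1 = [forall k : F, k != s + k * f s t (a + k%:A)^-1].
Proof.
have f_pow m (lt_m : (m < n.+4)%N) := f_st_pow dimL gen_a s t (Ordinal lt_m).
have := f_pow 0%N isT; have := f_pow 1%N isT; have := f_pow 2%N isT.
rewrite expr0 expr1 /= => f_a2 f_a f_1.
rewrite /good_pair !divr1 f_a2 f_a f_1 eq_sym oner_eq0 /=; apply: eq_forallb => k.
by rewrite expr1n div1r mulr0 addr0 mulr1.
Qed.

Lemma exists_good_pair s : s != 0 -> exists t, good_pair (f s t) a 1.
Proof.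
move=> s_neq0; pose y k := (a + k%:A)^-1.
pose c k := coord (pow_basis a n.+4) ord_max (y k).
pose bad k := ((k - s) / k - f s 0 (y k)) / c k.
have [|t t_good] := exists_notin_imset bad (A := [set~ 0]).
  by rewrite cardsC1 prednK //; apply/card_gt0P; exists 0.
exists t; rewrite good_pair_f_stE; apply/forallP => k.
have [->|k_neq0] := eqVneq k 0; first by rewrite mul0r addr0 eq_sym.
apply: contra t_good => /eqP k_eq; apply/imsetP; exists k; first by rewrite !inE.
have c_neq0 : c k != 0 by apply: coord_max_inv_neq0.
rewrite /bad {1}k_eq f_st_coord -/(y k) -/(c k); field.
by rewrite c_neq0 k_neq0.
Qed.

End GoodPairs.

Theorem proposition4p4 (F : finFieldType) (L : fieldExtType F) (h : nat) (a : L) :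
  (4 <= h)%N -> \dim {:L} = h -> a \notin 1%VS -> <<1%VS; a>>%VS = fullv ->
  (#|F|.-1 <= #|[set st : F * F | good_pair (f_st h a st.1 st.2) a 1]|)%N.
Proof.
case: h => [|[|[|[|n]]]] // _ dimL aNF gen_a.
set S := [set st | _]; rewrite -(cardsC1 0) (leq_trans _ (leq_imset_card fst S)) //.
apply/subset_leq_card/subsetP => s; rewrite !inE => s_neq0.
have [t st_good] := exists_good_pair dimL gen_a aNF s_neq0.
by apply/imsetP; exists (s, t); rewrite ?inE.
Qed.
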